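(* Let $\langle B,\wedge,{}'\rangle$ be an algebra with $\wedge$ binary and ${}'$ unary satisfying $x\wedge y\approx y\wedge x$, $x\wedge(y\wedge z)\approx(x\wedge y)\wedge z$, $x''\approx x$, and $x'\approx (x\wedge y)'\wedge(x\wedge y')'$. Then for all $x,y,z\in B$, writing $0=z\wedge z'$, we have $(x\wedge y)'=0'\wedge(x\wedge y\wedge x)'$.
   Context: By associativity, $x\wedge y\wedge x$ is unambiguous. In such an algebra the element $z\wedge z'$ does not depend on $z$; the paper denotes it $0$. *)

(* Expanding x ∧ x' by the fourth axiom, once for x and once for x' = (x')',
   writes it as a meet of the four complements (x ∧ y)', (x ∧ y')', (x' ∧ y)',
   (x' ∧ y')', which is symmetric in x and y; hence 0 = x ∧ x' is a constant.
   The axiom with y := x reads x' = (x ∧ x)' ∧ 0'; from it one gets 0 ∧ 0 = 0,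
   then that 0' is a unit, idempotence, and that 0 is absorbing.  Finally the
   axiom for x ∧ y with y := x' gives the claim, because (x ∧ y) ∧ x' = 0. *)
From Stdlib Require Import Setoid.

Section MeetComplementAlgebra.

Variable B : Type.
Variable meet : B -> B -> B.
Variable c : B -> B.

Hypothesis meetC : forall x y, meet x y = meet y x.
Hypothesis meetA : forall x y z, meet x (meet y z) = meet (meet x y) z.
Hypothesis complK : forall x, c (c x) = x.
Hypothesis compl_split : forall x y, c x = meet (c (meet x y)) (c (meet x (c y))).

Lemma meetCA x y z : meet x (meet y z) = meet y (meet x z).
Proof. rewrite meetA, (meetC x y), <- meetA. reflexivity. Qed.

Lemma meet_swap_ends a b d e :
  meet (meet a b) (meet d e) = meet (meet e b) (meet d a).
Proof.
  rewrite <- !meetA, (meetC d a), (meetCA b a), (meetCA e a).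
  rewrite (meetCA e b), (meetC e d). reflexivity.
Qed.

Lemma meet_compl_expand x y :
  meet x (c x) =
  meet (meet (c (meet (c x) y)) (c (meet (c x) (c y))))
       (meet (c (meet x y)) (c (meet x (c y)))).
Proof.
  rewrite <- (compl_split x y), <- (compl_split (c x) y), complK.
  reflexivity.
Qed.

Lemma meet_compl_const x y : meet x (c x) = meet y (c y).
Proof.
  rewrite (meet_compl_expand x y), (meet_compl_expand y x).
  rewrite (meetC (c y) x), (meetC (c y) (c x)), (meetC y x), (meetC y (c x)).
  apply meet_swap_ends.
Qed.

Section Zero.

Variable o : B.
Hypothesis meet_compl_zero : forall x, meet x (c x) = o.

Lemma meet_compl0_zero : meet (c o) o = o.
Proof. rewrite <- (complK o) at 2. apply meet_compl_zero. Qed.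

Lemma compl_meetxx x : c x = meet (c (meet x x)) (c o).
Proof. rewrite <- (meet_compl_zero x). apply compl_split. Qed.

Lemma meet00 : meet o o = o.
Proof.
  rewrite <- meet_compl0_zero at 1. rewrite (compl_meetxx o).
  rewrite <- !meetA, (meetCA (c (meet o o))), (meetC (c (meet o o))).
  rewrite meet_compl_zero. apply meet_compl0_zero.
Qed.

Lemma meet_compl0_compl0 : meet (c o) (c o) = c o.
Proof. rewrite (compl_meetxx o) at 3. rewrite meet00. reflexivity. Qed.

Lemma meetx_compl0 x : meet x (c o) = x.
Proof.
  rewrite <- (complK x), (compl_meetxx (c x)).
  rewrite <- meetA, meet_compl0_compl0. reflexivity.
Qed.

Lemma meetxx x : meet x x = x.
Proof.
  rewrite <- (complK (meet x x)), <- (meetx_compl0 (c (meet x x))).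
  rewrite <- compl_meetxx. apply complK.
Qed.

Lemma meet0x x : meet o x = o.
Proof.
  rewrite <- (meet_compl_zero x), meetC, meetA, meetxx. reflexivity.
Qed.

Lemma compl_meet x y : c (meet x y) = meet (c o) (c (meet (meet x y) x)).
Proof.
  rewrite (compl_split (meet x y) (c x)), complK.
  rewrite (meetC (meet x y) (c x)), meetA, (meetC (c x) x).
  rewrite meet_compl_zero, meet0x. reflexivity.
Qed.

End Zero.

End MeetComplementAlgebra.

Theorem lemma2p7 (B : Type) (meet : B -> B -> B) (c : B -> B)
  (comm : forall x y, meet x y = meet y x)
  (assoc : forall x y z, meet x (meet y z) = meet (meet x y) z)
  (invol : forall x, c (c x) = x)
  (ax : forall x y, c x = meet (c (meet x y)) (c (meet x (c y)))) :
  forall x y z : B,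
    c (meet x y) = meet (c (meet z (c z))) (c (meet (meet x y) x)).
Proof.
  intros x y z.
  apply (compl_meet B meet c comm assoc invol ax).
  intro w. apply (meet_compl_const B meet c comm assoc invol ax).
Qed.
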